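(* Let $F$ be a hyperfield, let $p$ be an irreducible polynomial over $F$, let $n\geq 2$ and let $q_1,\dots,q_n$ be polynomials over $F$ with $p\in\boxdot_{i=1}^n q_i$. Then there is an $i\in\{1,\dots,n\}$ such that $p\sim q_i$.
   Context: A hyperfield is a set $F$ with a commutative multiplication and a multivalued addition $\boxplus:F\times F\to\mathcal P(F)$ such that: there are unique $0,1\in F$ with $(F,\cdot,1)$ a commutative monoid and $F\setminus\{0\}$ a group; $ab\boxplus ac=\{ad: d\in b\boxplus c\}$; and $(F,\boxplus,0)$ is a commutative hypergroup (sums non-empty, commutative, $a\boxplus 0=\{a\}$, unique additive inverse, associative). A polynomial over $F$ is a finitely supported sequence $(c_i)_{i\in\mathbb N}$ in $F$, written $\sum c_iT^i$; its degree is the largest $k$ with $c_k\neq0$. The hyperproduct of $p=\sum c_iT^i$ and $q=\sum d_iT^i$ is $p\boxdot q=\{\sum e_iT^i : e_i\in \boxplus_{k+l=i} c_kd_l\}$, and $\boxdot_{i=1}^n q_i=\bigcup_{r\in\boxdot_{i=1}^{n-1}q_i} r\boxdot q_n$. Polynomials $p,q$ are associated, $p\sim q$, if $p\in a\boxdot q$ for some $a\in F\setminus\{0\}$ (constants viewed as constant polynomials). A polynomial $p$ is irreducible if $\deg p\geq1$ and for every $q_1,q_2$ with $p\in q_1\boxdot q_2$ we have $p\sim q_1$ or $p\sim q_2$. *)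

From Stdlib Require Import List Arith.
Import ListNotations.

(* A hyperfield.  The hyperaddition a ⊞ b is a set, encoded as the predicate
   [hadd a b : F -> Prop]  ( [hadd a b c]  means  c ∈ a ⊞ b ). *)
Record hyperfield := HyperField {
  hcar :> Type;
  hzero : hcar;
  hone : hcar;
  hmul : hcar -> hcar -> hcar;
  hadd : hcar -> hcar -> hcar -> Prop;
  hmulA : forall a b c, hmul a (hmul b c) = hmul (hmul a b) c;
  hmulC : forall a b, hmul a b = hmul b a;
  hmul1 : forall a, hmul hone a = a;
  hone_nz : hone <> hzero;
  hmul_nz : forall a b, a <> hzero -> b <> hzero -> hmul a b <> hzero;
  hinv_ex : forall a, a <> hzero -> exists b, b <> hzero /\ hmul a b = hone;
  hdistr : forall a b c x,
      hadd (hmul a b) (hmul a c) x <-> exists d, hadd b c d /\ x = hmul a d;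
  hadd_ne : forall a b, exists c, hadd a b c;
  haddC : forall a b c, hadd a b c <-> hadd b a c;
  hadd0 : forall a c, hadd a hzero c <-> c = a;
  hadd_inv : forall a, exists! b, hadd a b hzero;
  haddA : forall a b c x,
      (exists y, hadd a b y /\ hadd y c x) <-> (exists y, hadd b c y /\ hadd a y x)
}.

Arguments hzero {h}.
Arguments hone {h}.
Arguments hmul {h}.
Arguments hadd {h}.

Section Poly.
Variable F : hyperfield.

Fixpoint hsum (l : list F) : F -> Prop :=
  match l with
  | [] => fun c => c = hzero
  | x :: xs => fun c => exists y, hsum xs y /\ hadd x y c
  end.

Record hpoly := HPoly {
  coef : nat -> F;
  coef_fin : exists N, forall i, N <= i -> coef i = hzero
}.

Definition deg_ge1 (p : hpoly) : Prop := exists k, 1 <= k /\ coef p k <> hzero.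

Definition hprod (p q r : hpoly) : Prop :=
  forall i, hsum (map (fun k => hmul (coef p k) (coef q (i - k))) (seq 0 (S i)))
                 (coef r i).

(* iterated hyperproduct ⊡_{i=1}^n q_i, for n >= 1
   (base: ⊡_{i=1}^1 q_i = {q_1}; the value for n = 0 is a junk value). *)
Fixpoint bprod (q : nat -> hpoly) (n : nat) : hpoly -> Prop :=
  match n with
  | 0 => fun r => r = q 1
  | S m =>
      match m with
      | 0 => fun r => r = q 1
      | S _ => fun r => exists s, bprod q m s /\ hprod s (q n) r
      end
  end.

Definition hconst (a : F) : hpoly.
Proof.
  refine (HPoly (fun i => match i with 0 => a | S _ => hzero end) _).
  exists 1. intros [|i] H; [inversion H | reflexivity].
Defined.

Definition hassoc (p q : hpoly) : Prop :=
  exists a : F, a <> hzero /\ hprod (hconst a) q p.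

Definition hirreducible (p : hpoly) : Prop :=
  deg_ge1 p /\
  forall q1 q2, hprod q1 q2 p -> hassoc p q1 \/ hassoc p q2.

End Poly.

Arguments coef {F}.
Arguments hprod {F}.
Arguments bprod {F}.
Arguments hassoc {F}.
Arguments hirreducible {F}.

(* The proof is an induction on n, but the naive hypothesis "p is an element
   of the iterated product" is not preserved: writing p ∈ s ⊡ q_n with
   s ∈ q_1 ⊡ ... ⊡ q_(n-1), irreducibility only gives  p ~ s  or  p ~ q_n,
   and in the first case p is merely associated to an element of the shorter
   product.  We therefore prove the stronger statement "if p is associated
   to an element of q_1 ⊡ ... ⊡ q_n then p ~ q_i for some i" (lemma
   [assoc_iterated_factor]); the theorem is its instance p ~ p. *)
From Stdlib Require Import List Arith.
From Stdlib Require Import Classical Lia.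

Section HyperPoly.
Variable F : hyperfield.

(* 0 is absorbing: first 0·0 = 0, using 0·1 ∈ 0·1 ⊞ 0·0 by distributivity. *)
Lemma hmul00 : hmul (hzero : F) hzero = hzero.
Proof.
  assert (E : hmul (hzero : F) hone = hzero) by (rewrite hmulC; apply hmul1).
  assert (Hsum : hadd (hmul (hzero : F) hone) (hmul hzero hzero) (hmul hzero hone)).
  { apply hdistr. exists hone. split; [apply hadd0 | ]; reflexivity. }
  rewrite E, haddC, hadd0 in Hsum. symmetry; exact Hsum.
Qed.

(* For a ≠ 0: if a·0 ≠ 0, then a⁻¹·(a·0) = 1·0 = 0 contradicts the fact that
   F∖{0} is closed under multiplication. *)
Lemma hmul0 (a : F) : hmul a hzero = hzero.
Proof.
  destruct (classic (a = hzero)) as [-> | Ha]; [exact hmul00 |].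
  destruct (hinv_ex _ a Ha) as [b [Hb Hab]].
  apply NNPP; intros Hnz. apply (hmul_nz _ b (hmul a hzero) Hb Hnz).
  rewrite hmulA, (hmulC _ b a), Hab. apply hmul1.
Qed.

Lemma hmul0l (a : F) : hmul hzero a = hzero.
Proof. rewrite hmulC; apply hmul0. Qed.

Lemma hsum_mul (a : F) (l : list F) (x : F) :
  hsum F l x -> hsum F (map (hmul a) l) (hmul a x).
Proof.
  revert x; induction l as [|h t IH]; simpl; intros x H.
  - subst. apply hmul0.
  - destruct H as [y [Hy Hxy]]. exists (hmul a y). split; [auto |].
    apply hdistr. exists x. auto.
Qed.

Lemma hsum_zeros (l : list F) (c : F) :
  (forall z, In z l -> z = hzero) -> (hsum F l c <-> c = hzero).
Proof.
  revert c; induction l as [|h t IH]; simpl; intros c Hz; [tauto |].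
  rewrite (Hz h (or_introl eq_refl)). split.
  - intros [y [Hy H]]. apply IH in Hy; [| auto]. subst. apply hadd0 in H. auto.
  - intros ->. exists hzero. split; [apply IH; auto | apply hadd0; auto].
Qed.

Definition scale (a : F) (s : hpoly F) : hpoly F.
Proof.
  refine (HPoly F (fun i => hmul a (coef s i)) _).
  destruct (coef_fin F s) as [N HN]. exists N. intros i Hi.
  rewrite HN; [apply hmul0 | exact Hi].
Defined.

Lemma hprod_const (a : F) (s p : hpoly F) :
  hprod (hconst F a) s p <-> forall i, coef p i = hmul a (coef s i).
Proof.
  unfold hprod.
  assert (Hzeros : forall i, forall z,
    In z (map (fun k => hmul (coef (hconst F a) k) (coef s (i - k))) (seq 1 i)) ->
    z = hzero).
  { intros i z Hz. apply in_map_iff in Hz. destruct Hz as [k [<- Hk]].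
    apply in_seq in Hk. destruct k as [|k]; [lia |]. apply hmul0l. }
  assert (Hcoef : forall i c,
    hsum F (map (fun k => hmul (coef (hconst F a) k) (coef s (i - k))) (seq 0 (S i))) c
    <-> c = hmul a (coef s i)).
  { intros i c. simpl. rewrite Nat.sub_0_r. split.
    - intros [y [Hy H]]. apply (hsum_zeros _ _ (Hzeros i)) in Hy.
      subst. apply hadd0 in H. exact H.
    - intros ->. exists hzero.
      split; [apply (hsum_zeros _ _ (Hzeros i)) | apply hadd0]; reflexivity. }
  split; intros H i; apply Hcoef; auto.
Qed.

Lemma hassoc_coef (p r : hpoly F) :
  hassoc p r <-> exists a, a <> hzero /\ forall i, coef p i = hmul a (coef r i).
Proof.
  unfold hassoc. split; intros [a [Ha H]]; exists a; split; auto;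
    apply hprod_const; exact H.
Qed.

Lemma hassoc_refl (p : hpoly F) : hassoc p p.
Proof.
  apply hassoc_coef. exists hone. split; [apply hone_nz |].
  intros i; symmetry; apply hmul1.
Qed.

Lemma hassoc_trans (p r s : hpoly F) : hassoc p r -> hassoc r s -> hassoc p s.
Proof.
  rewrite !hassoc_coef. intros [a [Ha Hpr]] [b [Hb Hrs]].
  exists (hmul a b). split; [apply hmul_nz; auto |].
  intros i. rewrite Hpr, Hrs. apply hmulA.
Qed.

Lemma hassoc_scale (a : F) (s : hpoly F) : a <> hzero -> hassoc (scale a s) s.
Proof. intros Ha. apply hassoc_coef. exists a. split; auto. Qed.

Lemma hprod_scale (a : F) (s t r : hpoly F) :
  hprod s t r -> hprod (scale a s) t (scale a r).
Proof.
  unfold hprod; intros H i. cbn [coef scale].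
  pose proof (hsum_mul a _ _ (H i)) as Hs. rewrite map_map in Hs.
  erewrite map_ext; [exact Hs |]. intros k; symmetry; apply hmulA.
Qed.

Lemma hassoc_hprod (p r s t : hpoly F) :
  hassoc p r -> hprod s t r -> exists a, a <> hzero /\ hprod (scale a s) t p.
Proof.
  rewrite hassoc_coef. intros [a [Ha Hpr]] Hr. exists a. split; [exact Ha |].
  intros i. rewrite Hpr. apply (hprod_scale a _ _ _ Hr).
Qed.

Lemma assoc_iterated_factor (p : hpoly F) (q : nat -> hpoly F) :
  hirreducible p -> forall m r, bprod q (S m) r -> hassoc p r ->
  exists i, 1 <= i <= S m /\ hassoc p (q i).
Proof.
  intros [_ Hirr]. induction m as [|m IH]; intros r Hr Hpr.
  - simpl in Hr. subst. exists 1. split; [lia | exact Hpr].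
  - destruct Hr as [s [Hs Hsr]].
    destruct (hassoc_hprod _ _ _ _ Hpr Hsr) as [a [Ha Hp]].
    destruct (Hirr _ _ Hp) as [Hps | Hpq].
    + assert (Hps' : hassoc p s) by (apply (hassoc_trans _ _ _ Hps); apply hassoc_scale; exact Ha).
      destruct (IH s Hs Hps') as [i [Hi Hpi]].
      exists i. split; [lia | exact Hpi].
    + exists (S (S m)). split; [lia | exact Hpq].
Qed.

End HyperPoly.

Theorem mainTheorem2 (F : hyperfield) (p : hpoly F) (n : nat) (q : nat -> hpoly F) :
  hirreducible p -> 2 <= n -> bprod q n p ->
  exists i, 1 <= i <= n /\ hassoc p (q i).
Proof.
  intros Hirr Hn Hp. destruct n as [|m]; [lia |].
  exact (assoc_iterated_factor F p q Hirr m p Hp (hassoc_refl F p)).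
Qed.
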